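(* For every integer $n\ge 1$ there exists a graph (multigraph) $\mathcal{G}=(\mathcal{V},\mathcal{E})$ with $V=n+1$ vertices and vertices $s,t\in\mathcal{V}$ such that for any algorithm $\mathcal{A}$ that is $(\epsilon,\delta)$-differentially private on $\mathcal{G}$ and that on each input weight function outputs a path from $s$ to $t$, there exist edge weights $w:\mathcal{E}\to\{0,1\}$ for which the expected approximation error of the path $\mathcal{A}(w)$ is at least $\alpha=(V-1)\cdot\frac{1-(1+e^{\epsilon})\delta}{1+e^{2\epsilon}}$. In particular, for sufficiently small $\epsilon$ and $\delta$, $\alpha\ge 0.49(V-1)$.
   Context: Private edge weight model: for a graph $\mathcal{G}=(\mathcal{V},\mathcal{E})$ (parallel edges allowed), a weight function is $w:\mathcal{E}\to\mathbb{R}^+$ (nonnegative reals). Two weight functions $w,w'$ are neighboring if $\sum_{e\in\mathcal{E}}|w(e)-w'(e)|\le 1$. A randomized algorithm $\mathcal{A}$ taking weight functions on $\mathcal{E}$ as input is $(\epsilon,\delta)$-differentially private on $\mathcal{G}$ if for all neighboring $w,w'$ and all sets $S$ of outputs, $\Pr[\mathcal{A}(w)\in S]\le e^{\epsilon}\Pr[\mathcal{A}(w')\in S]+\delta$. The weight $w(P)$ of a path is the sum of the weights of its edges and $d_w(x,y)$ is the minimum weight of a path from $x$ to $y$. The approximation error of a path $P$ from $s$ to $t$ is $w(P)-d_w(s,t)$. *)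

From HB Require Import structures.
From mathcomp Require Import all_boot all_order all_algebra.
From mathcomp Require Import all_classical all_reals all_analysis.
Set Implicit Arguments. Unset Strict Implicit. Unset Printing Implicit Defensive.
Import Order.TTheory GRing.Theory Num.Theory.
Local Open Scope classical_set_scope.
Local Open Scope ring_scope.

(* An undirected multigraph on vertex set 'I_V with m edges is given by
   ends : 'I_m -> 'I_V * 'I_V (parallel edges and loops allowed). *)
Fixpoint is_walk (V m : nat) (ends : 'I_m -> 'I_V * 'I_V) (x y : 'I_V)
    (p : seq 'I_m) : bool :=
  match p with
  | [::] => x == y
  | e :: p' => ((ends e).1 == x) && is_walk ends (ends e).2 y p'
             || ((ends e).2 == x) && is_walk ends (ends e).1 y p'
  end.

Definition st_paths (V m : nat) (ends : 'I_m -> 'I_V * 'I_V) (s t : 'I_V)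
  : set (seq 'I_m) := [set p | is_walk ends s t p].

Definition path_weight (R : realType) (m : nat) (w : 'I_m -> R) (p : seq 'I_m) : R :=
  \sum_(e <- p) w e.

Definition dist (R : realType) (V m : nat) (ends : 'I_m -> 'I_V * 'I_V)
  (w : 'I_m -> R) (s t : 'I_V) : R :=
  inf [set path_weight w p | p in st_paths ends s t].

Definition approx_error (R : realType) (V m : nat) (ends : 'I_m -> 'I_V * 'I_V)
  (w : 'I_m -> R) (s t : 'I_V) (p : seq 'I_m) : R :=
  path_weight w p - dist ends w s t.

Definition nonneg_weight (R : realType) (m : nat) (w : 'I_m -> R) : Prop :=
  forall e, 0 <= w e.

Definition neighboring (R : realType) (m : nat) (w w' : 'I_m -> R) : Prop :=
  \sum_(e < m) `|w e - w' e| <= 1.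

(* A randomized algorithm with outputs in the countable set seq 'I_m is
   given by its output distribution on each input: A w : seq 'I_m -> R
   (probability mass function). *)
Definition prob (R : realType) (m : nat) (mu : seq 'I_m -> R) (S : set (seq 'I_m))
  : \bar R := \esum_(p in S) (mu p)%:E.

Definition is_distribution (R : realType) (m : nat) (mu : seq 'I_m -> R) : Prop :=
  (forall p, 0 <= mu p) /\ prob mu setT = 1%E.

Definition outputs_st_path (R : realType) (V m : nat) (ends : 'I_m -> 'I_V * 'I_V)
  (s t : 'I_V) (A : ('I_m -> R) -> seq 'I_m -> R) : Prop :=
  forall w, nonneg_weight w ->
    is_distribution (A w) /\ (forall p, ~~ is_walk ends s t p -> A w p = 0).

Definition diff_private (R : realType) (m : nat) (eps delta : R)
  (A : ('I_m -> R) -> seq 'I_m -> R) : Prop :=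
  forall w w', nonneg_weight w -> nonneg_weight w' -> neighboring w w' ->
    forall S : set (seq 'I_m),
      (prob (A w) S <= (expR eps)%:E * prob (A w') S + delta%:E)%E.

Definition expected_error (R : realType) (V m : nat) (ends : 'I_m -> 'I_V * 'I_V)
  (s t : 'I_V) (mu : seq 'I_m -> R) (w : 'I_m -> R) : \bar R :=
  \esum_(p in st_paths ends s t) ((mu p)%:E * (approx_error ends w s t p)%:E)%E.

From HB Require Import structures.
From mathcomp Require Import all_boot all_order all_algebra.
From mathcomp Require Import all_classical all_reals all_analysis.
From mathcomp Require Import zify lra.
Set Implicit Arguments. Unset Strict Implicit. Unset Printing Implicit Defensive.
Import Order.TTheory GRing.Theory Num.Theory.
Local Open Scope classical_set_scope.
Local Open Scope ring_scope.

(* Take the chain of [n] stages of two parallel edges from [s] to [t]; a sign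
   vector [sg] makes one edge of each stage free and the other cost [1], so
   [d_w(s, t) = 0] and the error of an [s]-[t] path is at least the number of
   stages where it takes the costly edge.  Toggling [sg] at stage [i] moves the
   weights by two neighboring steps, so privacy bounds the probability of the
   free edge under [sg] by [e^(2 eps)] times that of the costly edge under the
   toggled vector, plus [(1 + e^eps) delta].  Since every path crosses stage
   [i], the two events cover the output, and averaging over all sign vectors
   yields one whose expected error is at least
   [n (1 - (1 + e^eps) delta) / (1 + e^(2 eps))]. *)

Section OutputDistributions.
Variables (R : realType) (m : nat).
Implicit Types (mu : seq 'I_m -> R) (S T : set (seq 'I_m)).

Lemma prob_ge0 mu S : (forall p, 0 <= mu p) -> (0 <= prob mu S)%E.
Proof. by move=> mu_ge0; apply: esum_ge0 => p _; rewrite lee_fin. Qed.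

Lemma prob_le1 mu S : is_distribution mu -> (prob mu S <= 1)%E.
Proof.
case=> mu_ge0 <-; rewrite /prob (esum_mkcond S) (esum_mkcond setT).
by apply: le_esum => p _; rewrite in_setT; case: ifP; rewrite // lee_fin.
Qed.

Definition Pr mu S : R := fine (prob mu S).

Lemma probE mu S : is_distribution mu -> prob mu S = (Pr mu S)%:E.
Proof.
move=> mu_distr; have [mu_ge0 _] := mu_distr.
rewrite /Pr fineK // ge0_fin_numE ?prob_ge0 //.
by rewrite (le_lt_trans (prob_le1 S mu_distr)) // ltry.
Qed.

Lemma prob_cover mu S T : is_distribution mu ->
  (forall p, mu p != 0 -> S p \/ T p) -> (1 <= prob mu S + prob mu T)%E.
Proof.
case=> mu_ge0 mu1 ST.
have cond_ge0 (X : set (seq 'I_m)) p : (0 <= if p \in X then (mu p)%:E else 0)%E.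
  by case: ifP; rewrite // lee_fin.
rewrite -mu1 /prob (esum_mkcond S) (esum_mkcond T) -esumD //.
apply: le_esum => p _; have [->|/ST[Sp|Tp]] := eqVneq (mu p) 0.
- by apply: adde_ge0; case: ifP.
- by rewrite mem_set // leeDl.
- by rewrite (mem_set Tp) leeDr.
Qed.

Lemma sum_prob_le_esum (I : finType) mu (D : set (seq 'I_m))
    (E : I -> set (seq 'I_m)) (g : seq 'I_m -> R) :
  (forall p, 0 <= mu p) -> (forall p, ~ D p -> mu p = 0) ->
  (forall p, D p -> \sum_i (p \in E i)%:R <= g p) ->
  (\sum_i prob mu (E i) <= \esum_(p in D) (mu p)%:E * (g p)%:E)%E.
Proof.
move=> mu_ge0 mu_D Eg; rewrite /prob.
under eq_bigr do rewrite esum_mkcond.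
rewrite -esum_sum; last by move=> p i _ _; case: ifP; rewrite // lee_fin.
rewrite (esum_mkcond D); apply: le_esum => p _.
have -> : (\sum_i (if p \in E i then (mu p)%:E else 0))%E =
          (mu p * \sum_i (p \in E i)%:R)%:E.
  rewrite mulr_sumr -sumEFin; apply: eq_bigr => i _.
  by case: (p \in E i); rewrite ?mulr1 ?mulr0.
have [Dp|nDp] := pselect (D p).
  by rewrite mem_set // -EFinM lee_fin ler_wpM2l // Eg.
by rewrite memNset // mu_D // mul0r.
Qed.

Lemma diff_private2 eps delta A (w1 w2 w3 : 'I_m -> R) S :
  diff_private eps delta A ->
  nonneg_weight w1 -> nonneg_weight w2 -> nonneg_weight w3 ->
  neighboring w1 w2 -> neighboring w2 w3 ->
  (prob (A w1) S <=
     (expR (2 * eps))%:E * prob (A w3) S + ((1 + expR eps) * delta)%:E)%E.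
Proof.
move=> dpA w1_ge0 w2_ge0 w3_ge0 n12 n23.
apply: le_trans (dpA _ _ w1_ge0 w2_ge0 n12 S) _.
have expR_ge0E : (0 <= (expR eps)%:E)%E by rewrite lee_fin expR_ge0.
have := lee_wpmul2l expR_ge0E (dpA _ _ w2_ge0 w3_ge0 n23 S).
rewrite muleDr ?fin_num_adde_defl // muleA -EFinM -expRD.
move=> /(leeD2r delta%:E) /le_trans; apply.
by rewrite mulr_natl mulr2n -addeA -EFinM -EFinD mulrDl mul1r [delta + _]addrC.
Qed.

Lemma neighboring_single (w w' : 'I_m -> R) e0 :
  (forall e, e != e0 -> w e = w' e) -> `|w e0 - w' e0| <= 1 -> neighboring w w'.
Proof.
move=> eq_w le1; rewrite /neighboring (bigD1 e0) //= big1 ?addr0 // => e /eq_w ->.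
by rewrite subrr normr0.
Qed.

Lemma neighboringC (w w' : 'I_m -> R) : neighboring w w' -> neighboring w' w.
Proof. by rewrite /neighboring; under eq_bigr do rewrite distrC. Qed.

End OutputDistributions.

Lemma exists_ge_mean (R : realDomainType) (T : finType) (x0 : T) (g : T -> R) a :
  #|T|%:R * a <= \sum_x g x -> exists x, a <= g x.
Proof.
move=> le_mean; case: (pickP (fun x => a <= g x)) => [x ag | lt_g]; first by exists x.
suff : \sum_x g x < \sum_(x : T) a by rewrite sumr_const -mulr_natl ltNge le_mean.
apply: ltr_sum => [|x _]; first by apply/hasP; exists x0; rewrite ?mem_index_enum.
by rewrite ltNge lt_g.
Qed.

Section Toggle.
Variable I : finType.

Definition toggle (sg : {ffun I -> bool}) (i : I) : {ffun I -> bool} :=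
  [ffun j => sg j (+) (j == i)].

Lemma toggleK i : involutive (toggle^~ i).
Proof. by move=> sg; apply/ffunP => j; rewrite !ffunE addbK. Qed.

Lemma toggle_id sg i : toggle sg i i = ~~ sg i.
Proof. by rewrite ffunE eqxx addbT. Qed.

Lemma toggle_neq sg i j : j != i -> toggle sg i j = sg j.
Proof. by rewrite ffunE => /negPf ->; rewrite addbF. Qed.

Lemma exists_toggle_sum_ge (R : realFieldType) (f : {ffun I -> bool} -> I -> R) b c :
  0 <= c -> (forall sg i, b <= f sg i + c * f (toggle sg i) i) ->
  exists sg, #|I|%:R * (b / (1 + c)) <= \sum_i f sg i.
Proof.
move=> c_ge0 fb; set a := b / (1 + c).
have pair_ge sg i : 2 * a <= f sg i + f (toggle sg i) i.
  have := fb (toggle sg i) i; rewrite toggleK => fb'.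
  by rewrite /a mulrA ler_pdivrMr; [have := fb sg i; nra | lra].
have stage_ge i : #|{ffun I -> bool}|%:R * a <= \sum_sg f sg i.
  have : \sum_(sg : {ffun I -> bool}) 2 * a <= \sum_sg (f sg i + f (toggle sg i) i).
    by apply: ler_sum => sg _; exact: pair_ge.
  have toggle_sum : \sum_sg f (toggle sg i) i = \sum_sg f sg i.
    by rewrite [RHS](reindex_inj (inv_inj (toggleK i))).
  rewrite big_split /= toggle_sum sumr_const -mulr_natl; lra.
apply: (exists_ge_mean [ffun=> true]); rewrite exchange_big /=.
apply: le_trans (ler_sum _ (fun i _ => stage_ge i)).
by rewrite sumr_const -mulrnAr [#|I|%:R * a]mulr_natl.
Qed.

End Toggle.

Section Chain.
Variable k : nat.
Local Notation edge := 'I_(k.*2).+2.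

Lemma half_edge_lt (e : edge) : (e %/ 2 < k.+1)%N.
Proof. by have := ltn_ord e; lia. Qed.

(* Vertices [0, ..., k + 1] with the two parallel edges [2 i] and [2 i + 1]
   joining [i] to [i + 1]. *)
Definition stage (e : edge) : 'I_k.+1 := Ordinal (half_edge_lt e).

Definition chain_ends (e : edge) : 'I_k.+2 * 'I_k.+2 :=
  (widen_ord (leqnSn _) (stage e), lift ord0 (stage e)).

Lemma chain_edge_lt (i : 'I_k.+1) (b : bool) : (i.*2 + b < (k.*2).+2)%N.
Proof. by have := ltn_ord i; case: b => /=; lia. Qed.

Definition chain_edge i b : edge := Ordinal (chain_edge_lt i b).

Lemma stage_chain_edge i b : stage (chain_edge i b) = i.
Proof. by apply: val_inj => /=; case: b => /=; lia. Qed.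

Lemma odd_chain_edge i b : odd (chain_edge i b) = b.
Proof. by rewrite /= oddD odd_double; case: b. Qed.

Lemma chain_edgeE e : chain_edge (stage e) (odd e) = e.
Proof. by apply: val_inj; rewrite /= divn2 addnC odd_double_half. Qed.

Lemma chain_ends1 e : val (chain_ends e).1 = stage e.
Proof. by []. Qed.

Lemma chain_ends2 e : val (chain_ends e).2 = (stage e).+1.
Proof. exact: lift0. Qed.

Lemma chain_edge_eq i b e :
  (chain_edge i b == e) = (i == stage e) && (b == odd e).
Proof.
apply/eqP/andP => [<-|[/eqP -> /eqP ->]]; last exact: chain_edgeE.
by rewrite stage_chain_edge odd_chain_edge.
Qed.

Lemma walk_crosses p (x y : 'I_k.+2) i :
  is_walk chain_ends x y p -> (x <= i < y)%N -> has (fun e => stage e == i :> nat) p.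
Proof.
elim: p x => [|e p IH] x /=; first by move=> /eqP ->; lia.
case/orP => /andP[/eqP <- walk_p] xiy; apply/orP.
  have [|ne] := eqVneq (stage e : nat) i; first by left.
  by right; apply: IH walk_p _; move: xiy ne; rewrite chain_ends1 chain_ends2; lia.
by right; apply: IH walk_p _; move: xiy; rewrite chain_ends1 chain_ends2; lia.
Qed.

Lemma walk_uses_stage p (i : 'I_k.+1) :
  is_walk chain_ends ord0 ord_max p -> exists b, chain_edge i b \in p.
Proof.
move=> walk_p; have /hasP[e pe /eqP stage_e] := walk_crosses (i := i) walk_p (ltn_ord i).
exists (odd e); suff -> : i = stage e by rewrite chain_edgeE.
exact: val_inj.
Qed.

Definition follow (sg : 'I_k.+1 -> bool) : seq edge :=
  [seq chain_edge (inord i) (sg (inord i)) | i <- iota 0 k.+1].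

Lemma is_walk_follow sg : is_walk chain_ends ord0 ord_max (follow sg).
Proof.
suff walk_from d j : (j + d = k.+1)%N -> is_walk chain_ends (inord j) ord_max
    [seq chain_edge (inord i) (sg (inord i)) | i <- iota j d].
  rewrite (_ : ord0 = inord 0); first exact: walk_from.
  by apply: ord_inj; rewrite inordK.
elim: d j => [|d IH] j /=.
  by rewrite addn0 => ->; apply/eqP/val_inj; rewrite /= inordK.
move=> jd; have jk : (j < k.+1)%N by lia.
apply/orP; left; apply/andP; split.
  by apply/eqP/val_inj; rewrite chain_ends1 stage_chain_edge /= !inordK //; lia.
rewrite (_ : lift ord0 _ = inord j.+1); first by apply: IH; lia.
by apply: ord_inj; rewrite lift0 stage_chain_edge /= !inordK //; lia.
Qed.

Lemma follow_odd sg e : e \in follow sg -> odd e = sg (stage e).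
Proof. by case/mapP => i _ ->; rewrite stage_chain_edge odd_chain_edge. Qed.

End Chain.
Arguments chain_ends {k}.

Section HardInstances.
Variables (R : realType) (k : nat).
Local Notation edge := 'I_(k.*2).+2.
Implicit Types (sg : 'I_k.+1 -> bool) (i : 'I_k.+1) (p : seq edge).

Definition cost sg (e : edge) : R := (odd e != sg (stage e))%:R.

Definition bad_edge sg i : edge := chain_edge i (~~ sg i).

Definition uses (e : edge) : set (seq edge) := [set p : seq edge | e \in p].

Lemma in_uses e p : (p \in uses e) = (e \in p).
Proof. by apply/idP/idP => [/set_mem|/mem_set]. Qed.

Lemma cost_ge0 sg : nonneg_weight (cost sg).
Proof. by move=> e; exact: ler0n. Qed.

Lemma cost_sum_bad sg e : cost sg e = \sum_i (bad_edge sg i == e)%:R.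
Proof.
rewrite (bigD1 (stage e)) //= big1 ?addr0 => [|j ne]; rewrite /bad_edge chain_edge_eq.
  by rewrite /cost eqxx; case: (odd e); case: (sg _).
by rewrite (negPf ne).
Qed.

Lemma path_weight_ge_bad sg p :
  \sum_i (bad_edge sg i \in p)%:R <= path_weight (cost sg) p.
Proof.
rewrite /path_weight; elim: p => [|e p IH]; first by rewrite big_nil big1.
rewrite big_cons; apply: le_trans (lerD (lexx _) IH); rewrite cost_sum_bad -big_split.
apply: ler_sum => i _; rewrite in_cons /=.
by case: (_ == e) (_ \in p) => [] []; rewrite ?addr0 ?add0r ?lerDl.
Qed.

Lemma dist_cost_le0 sg : dist chain_ends (cost sg) ord0 ord_max <= 0.
Proof.
have free_path : path_weight (cost sg) (follow sg) = 0.
  rewrite /path_weight big_seq big1 // => e /follow_odd.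
  by rewrite /cost => ->; rewrite eqxx.
rewrite /dist -free_path; apply: ge_inf.
  by exists 0 => _ [p _ <-]; apply: sumr_ge0 => e _; exact: cost_ge0.
by exists (follow sg); first exact: is_walk_follow.
Qed.

Lemma approx_error_ge_bad sg p :
  \sum_i (bad_edge sg i \in p)%:R <= approx_error chain_ends (cost sg) ord0 ord_max p.
Proof.
apply: le_trans (path_weight_ge_bad sg p) _.
by rewrite /approx_error lerDl oppr_ge0 dist_cost_le0.
Qed.

Definition clear_stage sg i (e : edge) : R := if stage e == i then 0 else cost sg e.

Lemma clear_stage_ge0 sg i : nonneg_weight (clear_stage sg i).
Proof. by move=> e; rewrite /clear_stage; case: ifP => _; last exact: cost_ge0. Qed.

Lemma neighboring_clear_stage sg i : neighboring (cost sg) (clear_stage sg i).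
Proof.
apply: (neighboring_single (e0 := bad_edge sg i)) => [e|].
  rewrite /clear_stage /cost /bad_edge eq_sym chain_edge_eq.
  case: (eqVneq (stage e) i) => [->|] //=.
  by case: (odd e); case: (sg i).
rewrite /clear_stage /bad_edge stage_chain_edge eqxx subr0 /cost.
by case: (_ != _); rewrite ?normr1 ?normr0.
Qed.

Lemma clear_stage_toggle (sg : {ffun 'I_k.+1 -> bool}) i :
  clear_stage (toggle sg i) i = clear_stage sg i.
Proof.
apply: boolp.funext => e; rewrite /clear_stage /cost.
by case: eqP => // /eqP ne; rewrite toggle_neq.
Qed.

End HardInstances.

Section PrivateAlgorithm.
Variables (R : realType) (k : nat) (eps delta : R).
Variable A : ('I_(k.*2).+2 -> R) -> seq 'I_(k.*2).+2 -> R.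
Hypotheses (dpA : diff_private eps delta A)
  (outA : outputs_st_path chain_ends ord0 ord_max A).

Lemma Pr_bad_edge_toggle (sg : {ffun 'I_k.+1 -> bool}) i :
  1 - (1 + expR eps) * delta <=
    Pr (A (cost R sg)) (uses (bad_edge sg i)) +
    expR (2 * eps) * Pr (A (cost R (toggle sg i))) (uses (bad_edge (toggle sg i) i)).
Proof.
set tau := toggle sg i; set good := bad_edge tau i.
have [[sg_distr sg_supp] [tau_distr _]] := (outA (cost_ge0 R sg), outA (cost_ge0 R tau)).
have cover : (1 <= prob (A (cost R sg)) (uses (bad_edge sg i)) +
                   prob (A (cost R sg)) (uses good))%E.
  apply: prob_cover => // p mu_p.
  have walk_p : is_walk chain_ends ord0 ord_max p.
    by apply: contraNT mu_p => /sg_supp ->; rewrite eqxx.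
  have [b used] := walk_uses_stage i walk_p.
  rewrite /uses /good /bad_edge /= toggle_id negbK.
  by case: (sg i) b used => [] [] used; [right|left|left|right].
have neighbor_tau : neighboring (clear_stage R sg i) (cost R tau).
  by rewrite -(clear_stage_toggle R sg i); exact/neighboringC/neighboring_clear_stage.
have priv := diff_private2 (uses good) dpA (cost_ge0 R sg) (clear_stage_ge0 R sg i)
  (cost_ge0 R tau) (neighboring_clear_stage R sg i) neighbor_tau.
move: cover priv; rewrite !(probE _ sg_distr) (probE _ tau_distr).
by rewrite -!EFinM -!EFinD !lee_fin; lra.
Qed.

Lemma expected_error_ge_bad sg :
  ((\sum_i Pr (A (cost R sg)) (uses (bad_edge sg i)))%:E <=
     expected_error chain_ends ord0 ord_max (A (cost R sg)) (cost R sg))%E.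
Proof.
have [[mu_ge0 mu1] mu_supp] := outA (cost_ge0 R sg).
rewrite -sumEFin; under eq_bigr do rewrite -(probE _ (conj mu_ge0 mu1)).
apply: sum_prob_le_esum => // p; first by move=> not_walk; apply/mu_supp/negP.
by move=> _; under eq_bigr do rewrite in_uses; exact: approx_error_ge_bad.
Qed.

End PrivateAlgorithm.

Lemma ratio_ge_49_100 (R : realType) : exists eps0 delta0 : R, 0 < eps0 /\ 0 < delta0 /\
  forall eps delta : R, 0 <= eps -> eps < eps0 -> 0 <= delta -> delta < delta0 ->
    49%:R / 100%:R <= (1 - (1 + expR eps) * delta) / (1 + expR (2 * eps)).
Proof.
exists (1 / 200), (1 / 1000); split; first lra; split; first lra.
move=> eps delta eps_ge0 eps_lt delta_ge0 delta_lt.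
set Y := expR (2 * eps); have Y_gt0 : 0 < Y by exact: expR_gt0.
have expR_le_Y : expR eps <= Y by rewrite ler_expR; lra.
(* [1 - 2 eps <= expR (- 2 eps) = 1 / Y] *)
have Y_le : Y * (1 - 2 * eps) <= 1.
  have := expR_ge1Dx (- (2 * eps)); rewrite expRN -/Y => le_inv.
  by rewrite -[X in _ <= X](mulfV (lt0r_neq0 Y_gt0)) ler_pM2l.
rewrite ler_pdivlMr; [nra | lra].
Qed.

Theorem theorem5p1 (R : realType) :
  forall n : nat, (1 <= n)%N ->
  (exists (m : nat) (ends : 'I_m -> 'I_n.+1 * 'I_n.+1) (s t : 'I_n.+1),
     st_paths ends s t !=set0 /\
     forall (eps delta : R), 0 <= eps -> 0 <= delta ->
     forall A : ('I_m -> R) -> seq 'I_m -> R,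
       diff_private eps delta A -> outputs_st_path ends s t A ->
       exists w : 'I_m -> R, (forall e, w e = 0 \/ w e = 1) /\
         (((n.+1 - 1)%:R * ((1 - (1 + expR eps) * delta) / (1 + expR (2 * eps))))%:E
            <= expected_error ends s t (A w) w)%E)
  /\
  (exists eps0 delta0 : R, 0 < eps0 /\ 0 < delta0 /\
     forall eps delta : R, 0 <= eps -> eps < eps0 -> 0 <= delta -> delta < delta0 ->
       (49%:R / 100%:R) * (n.+1 - 1)%:R <=
         (n.+1 - 1)%:R * ((1 - (1 + expR eps) * delta) / (1 + expR (2 * eps)))).
Proof.
case=> [//|k] _; split; last first.
  have [eps0 [delta0 [eps0_gt0 [delta0_gt0 ratio_ge]]]] := ratio_ge_49_100 R.
  exists eps0, delta0; split => //; split => // eps delta *.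
  by rewrite mulrC ler_wpM2l ?ler0n ?ratio_ge.
exists (k.*2).+2, chain_ends, ord0, ord_max; split.
  by exists (follow (fun=> true)); exact: is_walk_follow.
move=> eps delta _ _ A dpA outA.
have [sg sum_ge] :=
  exists_toggle_sum_ge (expR_ge0 (2 * eps)) (Pr_bad_edge_toggle dpA outA).
exists (cost R sg); split; first by move=> e; rewrite /cost; case: (_ != _); [right|left].
apply: le_trans (expected_error_ge_bad outA sg).
by rewrite lee_fin subn1 /= -{1}[k.+1]card_ord.
Qed.
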